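(* Let $G$ be a finite group with an abelian Sylow $p$-subgroup $P$. Then \[ \chi(\mathcal F^*_G)=\frac{|\{\varphi\in\mathcal F_G(P): C_P(\varphi)>1\}|}{|\mathcal F_G(P)|}. \]
   Context: $\mathcal F_G(P)=N_G(P)/C_G(P)$, viewed as the group of automorphisms of $P$ induced by conjugation by elements of $N_G(P)$; $C_P(\varphi)$ is the subgroup of elements of $P$ fixed by $\varphi$. $\mathcal F^*_G$ is the category whose objects are the nonidentity $p$-subgroups of $G$, with $\mathcal F^*_G(H,K)=C_G(H)\backslash N_G(H,K)$, $N_G(H,K)=\{g\in G:g^{-1}Hg\le K\}$, composition induced by multiplication. $\chi$ is Leinster's Euler characteristic: for a finite category $\mathcal C$, a weighting is $k^\bullet$ with $\sum_b|\mathcal C(a,b)|k^b=1$ for all $a$, a coweighting is $k_\bullet$ with $\sum_ak_a|\mathcal C(a,b)|=1$ for all $b$, and if both exist $\chi(\mathcal C)=\sum_bk^b=\sum_ak_a$. *)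

From mathcomp Require Import all_boot all_order all_algebra all_fingroup all_solvable.
Set Implicit Arguments.
Unset Strict Implicit.
Unset Printing Implicit Defensive.
Import GRing.Theory.
Local Open Scope group_scope.

Section Defs.
Variable gT : finGroupType.

Definition Fstar_obj (p : nat) (G : {set gT}) : {set {group gT}} :=
  [set H : {group gT} | [&& H \subset G, p.-group H & H != 1 :> {set gT}]].

(* N_G(H,K) = { g in G | g^-1 H g <= K }  (H :^ g = g^-1 H g in MathComp) *)
Definition transporter (G H K : {set gT}) : {set gT} :=
  [set g in G | H :^ g \subset K].

(* F^*_G(H,K) = C_G(H) \ N_G(H,K), the set of right cosets C_G(H) g. *)
Definition Fstar_hom (G H K : {set gT}) : {set {set gT}} :=
  [set 'C_G(H) :* g | g in transporter G H K].

Definition is_weighting (p : nat) (G : {set gT}) (k : {group gT} -> rat) :=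
  forall a, a \in Fstar_obj p G ->
    (\sum_(b in Fstar_obj p G) (#|Fstar_hom G a b|)%:R * k b = 1)%R.

Definition is_coweighting (p : nat) (G : {set gT}) (k : {group gT} -> rat) :=
  forall b, b \in Fstar_obj p G ->
    (\sum_(a in Fstar_obj p G) k a * (#|Fstar_hom G a b|)%:R = 1)%R.

(* chi(F^*_G) = x : a weighting and a coweighting exist, and the Euler
   characteristic (sum of the weights, independent of the choice by Leinster)
   equals x. *)
Definition Fstar_euler_char_is (p : nat) (G : {set gT}) (x : rat) : Prop :=
  (exists k, is_weighting p G k /\ (\sum_(b in Fstar_obj p G) k b)%R = x) /\
  (exists k, is_coweighting p G k /\ (\sum_(a in Fstar_obj p G) k a)%R = x).

(* F_G(P) : automorphisms of P induced by conjugation by elements of N_G(P),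
   represented as functions gT -> gT (identity outside P). *)
Definition conj_on (P : {set gT}) (g : gT) : {ffun gT -> gT} :=
  [ffun x => if x \in P then x ^ g else x].

Definition FG (G P : {set gT}) : {set {ffun gT -> gT}} :=
  [set conj_on P g | g in 'N_G(P)].

Definition CP (P : {set gT}) (phi : {ffun gT -> gT}) : {set gT} :=
  [set x in P | phi x == x].

End Defs.

From mathcomp Require Import all_boot all_order all_algebra all_fingroup all_solvable.
From mathcomp Require Import zify ring.

(* A weighting k of F^*_G is obtained by solving the triangular system
   sum_(K >= H) k K = |C_G(H)| / |G|, since |F^*_G(H,K)| = |N_G(H,K)| / |C_G(H)|
   and N_G(H,K) collects the g in G with H^g <= K.  Dually, if nu is the
   coweighting of the poset of nonidentity p-subgroups (sum_(K <= H) nu K = 1),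
   then nu H * |C_G(H)| / |G| is a coweighting, so chi(F^*_G) is the sum of these
   values.  Averaging over the conjugates of H lying in P, and using that for an
   abelian Sylow P and H <= P one has N_G(H,P) = C_G(H) N_G(P), the sum becomes
   |N_G(P)|^-1 sum_(n in N_G(P)) sum_(H <= C_P(n)) nu H, which counts the n with
   C_P(n) > 1; dividing out C_(N_G(P))(P) gives the ratio over F_G(P). *)
Set Implicit Arguments.
Unset Strict Implicit.
Unset Printing Implicit Defensive.
Import GRing.Theory Num.Theory.
Local Open Scope group_scope.

Section TriangularSystem.
Local Open Scope ring_scope.
Variables (T : finType) (V : zmodType) (R : rel T) (m : T -> nat) (c : T -> V).
Hypothesis R_decr : forall x y, R x y -> (m y < m x)%N.

Fixpoint triangular_approx (n : nat) (x : T) : V :=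
  if n is n'.+1 then c x - \sum_(y | R x y) triangular_approx n' y else 0.

Definition triangular_solution (x : T) : V := triangular_approx (m x).+1 x.

Lemma triangular_approx_stable n1 n2 x :
  (m x < n1)%N -> (m x < n2)%N -> triangular_approx n1 x = triangular_approx n2 x.
Proof.
elim: n1 n2 x => [|n1 IH] [|n2] x //= lt1 lt2.
congr (_ - _); apply: eq_bigr => y Rxy.
by apply: IH; have := R_decr Rxy; lia.
Qed.

Lemma triangular_solutionE x :
  triangular_solution x + \sum_(y | R x y) triangular_solution y = c x.
Proof.
rewrite -[RHS](subrK (\sum_(y | R x y) triangular_approx (m x) y)); congr (_ + _).
apply: eq_bigr => y Rxy; have := R_decr Rxy => lt_yx.
by apply: triangular_approx_stable; lia.
Qed.

Lemma triangular_solution_unique (k : T -> V) :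
  (forall x, k x + \sum_(y | R x y) k y = c x) -> k =1 triangular_solution.
Proof.
move=> hk x; have [n] := ubnP (m x); elim: n x => // n IH x lt_xn.
have e : \sum_(y | R x y) k y = \sum_(y | R x y) triangular_solution y.
  by apply: eq_bigr => y Rxy; apply: IH; have := R_decr Rxy; lia.
by apply: (addIr (\sum_(y | R x y) k y)); rewrite hk e triangular_solutionE.
Qed.

End TriangularSystem.

Lemma sum_weighting_eq_sum_coweighting (R : nzRingType) (T : finType) (O : {pred T})
    (M : T -> T -> R) (k k' : T -> R) :
  {in O, forall a, \sum_(b in O) M a b * k b = 1}%R ->
  {in O, forall b, \sum_(a in O) k' a * M a b = 1}%R ->
  (\sum_(b in O) k b = \sum_(a in O) k' a)%R.
Proof.
move=> wk ck'.
transitivity (\sum_(b in O) \sum_(a in O) k' a * M a b * k b)%R.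
  by apply: eq_bigr => b bO; rewrite -mulr_suml ck' ?mul1r.
rewrite exchange_big /=; apply: eq_bigr => a aO.
by rewrite -[RHS]mulr1 -(wk a aO) mulr_sumr; apply: eq_bigr => b _; rewrite mulrA.
Qed.

Lemma sumr_indicator (R : pzSemiRingType) (T : finType) (A Q : pred T) (F : T -> R) :
  (\sum_(x | A x) (Q x)%:R * F x = \sum_(x | A x && Q x) F x)%R.
Proof. by rewrite big_mkcondr; apply: eq_bigr => x _; case: (Q x); rewrite ?mul1r ?mul0r. Qed.

Lemma card_set_cond (R : pzSemiRingType) (T : finType) (A : {pred T}) (Q : pred T) :
  (#|[set x in A | Q x]|%:R = \sum_(x in A) (Q x)%:R :> R)%R.
Proof. by rewrite -sum1dep_card natr_sum big_mkcondr; apply: eq_bigr => x _; case: (Q x). Qed.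

Lemma card_group_neq0 (R : numDomainType) (gT : finGroupType) (H : {group gT}) :
  (#|H|%:R != 0 :> R)%R.
Proof. by rewrite pnatr_eq0 -lt0n cardG_gt0. Qed.

Section FstarCounting.
Variables (gT : finGroupType) (p : nat) (G : {group gT}).
Local Notation O := (Fstar_obj p G).

Lemma Fstar_objJ (H : {group gT}) g : g \in G -> ((H :^ g)%G \in O) = (H \in O).
Proof.
by move=> gG; rewrite !inE /= sub_conjg (conjGid (groupVr gG)) pgroupJ conjsg_eq1.
Qed.

Lemma Fstar_obj_sub (H : {group gT}) : H \in O -> H \subset G.
Proof. by rewrite inE => /and3P[]. Qed.

Lemma card_centJ (H : {set gT}) g : g \in G -> #|'C_G(H :^ g)| = #|'C_G(H)|.
Proof. by move=> gG; rewrite centJ -{1}(conjGid gG) -conjIg cardJg. Qed.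

Lemma card_transporterJ (H K : {set gT}) g : g \in G ->
  #|transporter G (H :^ g) K| = #|transporter G H K|.
Proof.
move=> gG; rewrite -[RHS](card_lcoset _ g^-1); apply: eq_card => x.
by rewrite mem_lcoset invgK !inE conjsgM groupMl.
Qed.

Lemma card_Fstar_hom (H K : {set gT}) :
  (#|Fstar_hom G H K| * #|'C_G(H)| = #|transporter G H K|)%N.
Proof.
rewrite -[#|transporter G H K|]sum1_card (partition_big_imset (fun g => 'C_G(H) :* g)) /=.
rewrite -sum_nat_const; apply: eq_bigr => _ /imsetP[g0 tr_g0 ->].
rewrite sum1_card -(card_rcoset 'C_G(H) g0); apply: eq_card => x /=.
rewrite [in LHS]unfold_in /=; apply/idP/andP => [xCg0 | [_ /eqP <-]]; last exact: rcoset_refl.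
split; last exact/eqP/rcoset_eqP.
case/rcosetP: xCg0 tr_g0 => c /setIP[cG cH] ->; rewrite !inE => /andP[g0G sHg0K].
by rewrite groupM //= conjsgM (normP (subsetP (cent_sub H) c cH)).
Qed.

Lemma card_Fstar_homE (H K : {set gT}) :
  (#|Fstar_hom G H K|%:R
     = (\sum_(g in G) (H :^ g \subset K)%:R) / #|'C_G(H)|%:R :> rat)%R.
Proof.
rewrite -(card_set_cond _ G (fun g => H :^ g \subset K)).
by rewrite -card_Fstar_hom natrM mulfK ?card_group_neq0.
Qed.

Lemma sum_Fstar_objJ (V : zmodType) (F : {group gT} -> V) g : g \in G ->
  (\sum_(H in O) F (H :^ g)%G = \sum_(H in O) F H)%R.
Proof.
move=> gG; rewrite [RHS](reindex (fun H : {group gT} => (H :^ g)%G)) /=.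
  by apply: eq_bigl => H; rewrite Fstar_objJ.
exists (fun H : {group gT} => (H :^ g^-1)%G) => H _; apply: val_inj.
  exact: conjsgK.
exact: conjsgKV.
Qed.

Lemma sum_Fstar_obj_over (V : zmodType) (F : {group gT} -> V) (H : {group gT}) :
  H \in O -> (\sum_(K in O | H \subset K) F K = F H + \sum_(K in O | H \proper K) F K)%R.
Proof.
move=> HO; rewrite (bigD1 H) ?HO ?subxx //=; congr (_ + _)%R.
by apply: eq_bigl => K; rewrite properEneq eq_sym andbA andbAC.
Qed.

Lemma sum_Fstar_obj_under (V : zmodType) (F : {group gT} -> V) (H : {group gT}) :
  H \in O -> (\sum_(K in O | K \subset H) F K = F H + \sum_(K in O | K \proper H) F K)%R.
Proof.
move=> HO; rewrite (bigD1 H) ?HO ?subxx //=; congr (_ + _)%R.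
by apply: eq_bigl => K; rewrite properEneq andbA andbAC.
Qed.

Lemma sum_Fstar_obj_transporter (f : {group gT} -> rat) (P : {set gT}) :
  (forall (H : {group gT}) g, g \in G -> f (H :^ g)%G = f H) ->
  (\sum_(H in O) f H * #|transporter G H P|%:R
     = #|G|%:R * \sum_(H in O | H \subset P) f H)%R.
Proof.
move=> fJ; under eq_bigr => H _ do rewrite card_set_cond mulr_sumr.
rewrite exchange_big /= mulr_natl -sumr_const.
apply: eq_bigr => g gG; rewrite -sumr_indicator -[RHS](sum_Fstar_objJ _ gG).
by apply: eq_bigr => H _; rewrite fJ // mulrC.
Qed.

End FstarCounting.

Section LeinsterWeights.
Variables (gT : finGroupType) (p : nat) (G : {group gT}).
Local Notation O := (Fstar_obj p G).
Local Open Scope ring_scope.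

Definition Fstar_weight : {group gT} -> rat :=
  triangular_solution (fun H K => (K \in O) && (H \proper K)) (fun H => #|G| - #|H|)%N
    (fun H => #|'C_G(H)|%:R / #|G|%:R).

Lemma Fstar_weightE (H : {group gT}) :
  Fstar_weight H + \sum_(K in O | H \proper K) Fstar_weight K = #|'C_G(H)|%:R / #|G|%:R.
Proof.
apply: triangular_solutionE => {}H K /andP[KO ltHK].
by have := proper_card ltHK; have := subset_leq_card (Fstar_obj_sub KO); lia.
Qed.

Lemma Fstar_weight_weighting : is_weighting p G Fstar_weight.
Proof.
move=> H HO.
under eq_bigr => K _ do rewrite card_Fstar_homE mulrAC mulr_suml.
rewrite -mulr_suml exchange_big /=.
under eq_bigr => g gG.
  rewrite sumr_indicator (@sum_Fstar_obj_over _ p G _ _ (H :^ g)%G) ?Fstar_objJ //.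
  rewrite Fstar_weightE /= card_centJ //.
over.
by rewrite sumr_const -mulr_natr; field; rewrite !card_group_neq0.
Qed.

Definition Fstar_poset_coweight : {group gT} -> rat :=
  triangular_solution (fun H K => (K \in O) && (K \proper H)) (fun H => #|H|) (fun=> 1).

Local Notation nu := Fstar_poset_coweight.

Lemma Fstar_poset_coweight_rec_decr (H K : {group gT}) :
  (K \in O) && (K \proper H) -> (#|K| < #|H|)%N.
Proof. by case/andP=> _ /proper_card. Qed.

Lemma Fstar_poset_coweightE (H : {group gT}) :
  nu H + \sum_(K in O | K \proper H) nu K = 1.
Proof. exact: triangular_solutionE Fstar_poset_coweight_rec_decr H. Qed.

Lemma Fstar_poset_coweightJ (H : {group gT}) g : g \in G -> nu (H :^ g)%G = nu H.
Proof.
move=> gG; apply: (triangular_solution_unique Fstar_poset_coweight_rec_decr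
  (k := fun H => nu (H :^ g)%G)) => {}H.
rewrite -(Fstar_poset_coweightE (H :^ g)%G); congr (_ + _).
rewrite big_mkcondr [RHS]big_mkcondr -[RHS](sum_Fstar_objJ _ _ gG).
by apply: eq_bigr => K _; rewrite properJ.
Qed.

Lemma sum_Fstar_poset_coweight_pgroup (K : {group gT}) :
  K \subset G -> p.-group K ->
  \sum_(H in O | H \subset K) nu H = (K != 1%g :> {set gT})%:R.
Proof.
move=> sKG pK; have [K1 | ntK] := eqVneq (K : {set gT}) 1%g.
  by apply: big1 => H; rewrite inE K1 subG1 => /andP[/and3P[_ _ /negbTE ->]].
have KO : K \in O by rewrite inE sKG pK ntK.
by rewrite sum_Fstar_obj_under // Fstar_poset_coweightE.
Qed.

Definition Fstar_coweight (H : {group gT}) : rat := nu H * #|'C_G(H)|%:R / #|G|%:R.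

Lemma Fstar_coweight_coweighting : is_coweighting p G Fstar_coweight.
Proof.
move=> K KO.
transitivity ((\sum_(H in O) nu H * #|transporter G H K|%:R) / #|G|%:R).
  rewrite mulr_suml; apply: eq_bigr => H _.
  by rewrite /Fstar_coweight -card_Fstar_hom natrM; field; rewrite !card_group_neq0.
rewrite (sum_Fstar_obj_transporter _ _ Fstar_poset_coweightJ).
by rewrite sum_Fstar_obj_under // Fstar_poset_coweightE mulr1 divff ?card_group_neq0.
Qed.

End LeinsterWeights.

Section AbelianSylow.
Variables (gT : finGroupType) (p : nat) (G P : {group gT}).
Hypotheses (sylP : p.-Sylow(G) P) (abP : abelian P).
Local Notation O := (Fstar_obj p G).

Lemma transporter_Sylow_gt0 (H : {group gT}) : H \in O -> (0 < #|transporter G H P|)%N.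
Proof.
rewrite inE => /and3P[sHG pH _]; have [x xG sHxP] := Sylow_Jsub sylP sHG pH.
by rewrite card_gt0; apply/set0Pn; exists x; rewrite inE xG.
Qed.

Lemma transporter_abelian_Sylow (H : {group gT}) : H \subset P ->
  transporter G H P = 'C_G(H) * 'N_G(P).
Proof.
have sPG := pHall_sub sylP.
move=> sHP; apply/setP => x; rewrite inE; apply/andP/idP => [[xG sHxP] | ]; last first.
  case/mulsgP=> c n /setIP[cG cH] /setIP[nG nP] ->; rewrite groupM //; split=> //.
  by rewrite conjsgM (normP (subsetP (cent_sub H) c cH)) -(normP nP) conjSg.
(* P and P^x are both Sylow in C_G(H^x), so they are conjugate there. *)
have sylC_P : p.-Sylow('C_G(H :^ x)) P.
  by apply: pHall_subl sylP; rewrite ?subsetIl // subsetI sPG sub_abelian_cent.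
have sylC_Px : p.-Sylow('C_G(H :^ x)) (P :^ x).
  apply: pHall_subl (subsetIl _ _) _; last by rewrite pHallJ.
  by rewrite subsetI sub_conjg (conjGid (groupVr xG)) sPG sub_abelian_cent ?abelianJ ?conjSg.
have [c /setIP[cG cHx] defPx] := Sylow_trans sylC_P sylC_Px.
have nPxc : x * c^-1 \in 'N_G(P).
  by rewrite inE groupM ?groupV //=; apply/normP; rewrite conjsgM defPx conjsgK.
have cHcx : c ^ x^-1 \in 'C_G(H).
  by rewrite inE groupJ ?groupV //= -mem_conjg -centJ.
have -> : x = c ^ x^-1 * (x * c^-1) by rewrite conjgE invgK !mulgA mulgKV mulgK.
exact: mem_mulg.
Qed.

Lemma card_transporter_abelian_Sylow (H : {group gT}) : H \subset P ->
  (#|transporter G H P| * #|'C_G(H) :&: 'N_G(P)| = #|'C_G(H)| * #|'N_G(P)|)%N.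
Proof. by move=> sHP; rewrite transporter_abelian_Sylow // mul_cardG. Qed.

End AbelianSylow.

Section CoweightSum.
Variables (gT : finGroupType) (p : nat) (G P : {group gT}).
Hypotheses (sylP : p.-Sylow(G) P) (abP : abelian P).
Local Notation O := (Fstar_obj p G).
Local Notation nu := (Fstar_poset_coweight p G).
Local Open Scope ring_scope.

Lemma sum_Fstar_poset_coweight_cent (L : {set gT}) : L \subset G ->
  \sum_(H in O | H \subset P) nu H * #|'C_G(H) :&: L|%:R
    = #|[set n in L | 'C_P[n] != 1%g]|%:R.
Proof.
move=> sLG.
transitivity (\sum_(H in O | H \subset P) \sum_(n in L) (H \subset 'C_P[n])%:R * nu H).
  apply: eq_bigr => H /andP[_ sHP]; rewrite mulrC -mulr_suml -card_set_cond.
  congr (_%:R * _); apply: eq_card => n; rewrite !inE subsetI sHP sub_cent1 /=.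
  by case nL: (n \in L); rewrite ?andbF ?(subsetP sLG) ?andbT.
rewrite exchange_big card_set_cond; apply: eq_bigr => n nL.
have sCP : 'C_P[n] \subset P := subsetIl _ _.
rewrite sumr_indicator.
transitivity (\sum_(H in O | H \subset 'C_P[n]) nu H).
  apply: eq_bigl => H; case sHC: (H \subset 'C_P[n]); rewrite ?andbF //.
  by rewrite (subset_trans sHC sCP) !andbT.
rewrite (@sum_Fstar_poset_coweight_pgroup _ _ _ 'C_P[n]%G) //.
  exact: subset_trans sCP (pHall_sub sylP).
exact: pgroupS sCP (pHall_pgroup sylP).
Qed.

Lemma sum_Fstar_coweight_abelian_Sylow :
  \sum_(H in O) Fstar_coweight p G H
    = #|[set n in 'N_G(P) | 'C_P[n] != 1%g]|%:R / #|'N_G(P)|%:R.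
Proof.
(* f is conjugation invariant and well defined since every H in O is conjugate
   into P; on subgroups of P it equals nu H * |C_N(H)| / |N| by the fusion lemma. *)
pose f H := nu H * #|'C_G(H)|%:R / #|transporter G H P|%:R.
have fJ (H : {group gT}) g : g \in G -> f (H :^ g)%G = f H.
  by move=> gG; rewrite /f Fstar_poset_coweightJ //= card_centJ // card_transporterJ.
transitivity ((\sum_(H in O) f H * #|transporter G H P|%:R) / #|G|%:R).
  rewrite mulr_suml; apply: eq_bigr => H HO; rewrite /f divfK //.
  by rewrite pnatr_eq0 -lt0n (transporter_Sylow_gt0 sylP).
rewrite sum_Fstar_obj_transporter // mulrC mulKf ?card_group_neq0 //.
rewrite -(sum_Fstar_poset_coweight_cent (subsetIl G _)) mulr_suml.
apply: eq_bigr => H /andP[HO sHP]; rewrite /f; apply/eqP.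
rewrite eqr_div ?card_group_neq0 ?pnatr_eq0 -?lt0n ?(transporter_Sylow_gt0 sylP HO) //.
rewrite -!mulrA -!natrM [(_ * #|transporter _ _ _|)%N]mulnC.
by rewrite (card_transporter_abelian_Sylow sylP abP sHP).
Qed.

End CoweightSum.

Section InducedAutomorphisms.
Variables (gT : finGroupType) (G P : {group gT}).
Local Notation N := 'N_G(P).

Lemma CP_conj_on n : CP P (conj_on P n) = 'C_P[n].
Proof.
apply/setP => x; rewrite inE [in RHS]inE ffunE; case: (x \in P) => //=.
by rewrite conjg_fix; apply/commgP/cent1P.
Qed.

Lemma conj_on_eq m n : m \in N ->
  (n \in N) && (conj_on P n == conj_on P m) = (n \in 'C_N(P) :* m).
Proof.
move=> mN; rewrite mem_rcoset [in RHS]inE (groupMr _ (groupVr mN)).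
case nN: (n \in N) => //=; apply/eqP/centP => [e x xP | cPnm].
  have := congr1 (fun f : {ffun gT -> gT} => f x) e; rewrite /= !ffunE xP => exnm.
  by apply/commute_sym/commgP/conjg_fixP; rewrite conjgM exnm conjgK.
apply/ffunP => x; rewrite !ffunE; case xP: (x \in P) => //.
by rewrite -{1}(mulgKV m n) conjgM; have /commute_sym/commgP/conjg_fixP-> := cPnm x xP.
Qed.

Lemma sum_conj_on (F : {ffun gT -> gT} -> rat) :
  (\sum_(n in N) F (conj_on P n) = #|'C_N(P)|%:R * \sum_(phi in FG G P) F phi)%R.
Proof.
rewrite (partition_big_imset (conj_on P)) /= mulr_sumr.
apply: eq_bigr => _ /imsetP[m mN ->].
rewrite (eq_bigr (fun=> F (conj_on P m))) => [|n /andP[_ /eqP->] //].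
rewrite sumr_const mulr_natl -(card_rcoset _ m); congr (_ *+ _)%R.
by apply: eq_card => n; rewrite -conj_on_eq // unfold_in.
Qed.

Lemma card_conj_on_ratio (Q : pred {ffun gT -> gT}) :
  (#|[set n in N | Q (conj_on P n)]|%:R / #|N|%:R
     = #|[set phi in FG G P | Q phi]|%:R / #|FG G P|%:R :> rat)%R.
Proof.
rewrite -[#|N|]sum1_card -[#|FG G P|]sum1_card !natr_sum !card_set_cond.
rewrite (sum_conj_on (fun phi => (Q phi)%:R)%R) (sum_conj_on (fun=> 1%:R)%R).
by rewrite invfM mulrACA divff ?mul1r ?card_group_neq0.
Qed.

End InducedAutomorphisms.

Theorem corollary5p6 (gT : finGroupType) (p : nat) (G P : {group gT}) :
  prime p -> P \in 'Syl_p(G) -> abelian P ->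
  Fstar_euler_char_is p G
    ((#|[set phi in FG G P | ([1 gT] \proper CP P phi)]|)%:R
       / (#|FG G P|)%:R)%R.
Proof.
move=> _; rewrite inE => sylP abP.
have chi_eq : (\sum_(H in Fstar_obj p G) Fstar_coweight p G H
    = #|[set phi in FG G P | [1 gT] \proper CP P phi]|%:R / #|FG G P|%:R)%R.
  rewrite (sum_Fstar_coweight_abelian_Sylow sylP abP) -card_conj_on_ratio.
  by congr (_%:R / _)%R; apply: eq_card => n; rewrite !inE CP_conj_on proper1G.
split.
- exists (Fstar_weight p G); split; first exact: Fstar_weight_weighting.
  by rewrite (sum_weighting_eq_sum_coweighting (@Fstar_weight_weighting _ p G)
    (@Fstar_coweight_coweighting _ p G)).
- by exists (Fstar_coweight p G); split; first exact: Fstar_coweight_coweighting.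
Qed.
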